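(* Fix $r>0$ and a tiling of the plane by regular hexagons of side length $r$. For each hexagon (cell) of the tiling, its grid circle is the closed disk of radius $r$ centered at the center of the hexagon (the circumscribed disk of the hexagon). Then every closed disk of radius $r$ in the plane is contained in the union of the grid circles of at most $5$ cells of the tiling. *)

From Stdlib Require Import Reals ZArith List.
Open Scope R_scope.

Definition dist2 (p q : R * R) : R :=
  (fst p - fst q)^2 + (snd p - snd q)^2.

Definition in_disk (c : R * R) (rho : R) (q : R * R) : Prop :=
  dist2 q c <= rho^2.

(* A tiling of the plane by regular hexagons of side r, placed by an
   isometry: o is the center of one hexagon, (ux,uy) a unit vector.
   The hexagon centers form the triangular lattice
     o + r*sqrt 3 * (a * u + b * w),  a b : Z,
   where w is u rotated by 60 degrees. *)
Definition hex_center (r : R) (o : R * R) (u : R * R) (ab : Z * Z) : R * R :=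
  let s := r * sqrt 3 in
  let a := IZR (fst ab) in
  let b := IZR (snd ab) in
  let wx := fst u / 2 - snd u * sqrt 3 / 2 in
  let wy := snd u / 2 + fst u * sqrt 3 / 2 in
  (fst o + s * (a * fst u + b * wx), snd o + s * (a * snd u + b * wy)).

Definition grid_circle (r : R) (o u : R * R) (ab : Z * Z) (q : R * R) : Prop :=
  in_disk (hex_center r o u ab) r q.

From Stdlib Require Import Reals ZArith List Lra Psatz Lia.
Open Scope R_scope.

(* In the lattice coordinates of the tiling the cell centres are the integer
   points, and hnorm x y is the squared distance, in units of r^2, between two
   points whose coordinates differ by (x, y).  The centre p of the disk lies
   within r of some centre c, in the 60-degree sector of c spanned by two
   neighbours c + e and c + e'.  Every point q of the disk is within 2r of c.
   If it is within r of c, the cell c catches it.  Otherwise q lies in the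
   60-degree sector of c around one of the six neighbours of c, and is then
   within r of that neighbour.  The sectors around c - e and c - e' do not
   occur: there the angle at c between p and q is obtuse, so q would be
   farther than r from p.  This leaves the five cells c, c + e, c + e',
   c + e' - e and c + e - e'. *)

Definition hnorm (x y : R) : R := 3 * (x * x + x * y + y * y).

Lemma hnorm_ge0 x y : 0 <= hnorm x y.
Proof.
  unfold hnorm.
  pose proof (pow2_ge_0 (x + y / 2)); pose proof (pow2_ge_0 y); nra.
Qed.

Lemma hnorm_sub x y s t :
  hnorm (x - s) (y - t) = hnorm x y + hnorm s t - 3 * (s * (2 * x + y) + t * (x + 2 * y)).
Proof. unfold hnorm; ring. Qed.

Lemma hnorm_le_4_of_disks x y s t :
  hnorm s t <= 1 -> hnorm (x - s) (y - t) <= 1 -> hnorm x y <= 4.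
Proof.
  intros Hst Hxy.
  (* parallelogram law for the points 0, (s,t), (x,y) and (2s-x, 2t-y) *)
  assert (Hpar : hnorm x y + hnorm (2 * s - x) (2 * t - y)
                 = 2 * hnorm s t + 2 * hnorm (x - s) (y - t)) by (unfold hnorm; ring).
  pose proof (hnorm_ge0 (2 * s - x) (2 * t - y)); lra.
Qed.

(* [0 <= x - y] and [0 <= x + 2 * y] cut out the 60-degree sector around
   e1 = (1, 0). *)
Lemma hnorm_sub_e1_le1 x y : 0 <= x - y -> 0 <= x + 2 * y ->
  1 < hnorm x y -> hnorm x y <= 4 -> hnorm (x - 1) y <= 1.
Proof.
  intros Hxy Hx2y Hlo Hhi.
  set (z := 2 * x + y).
  assert (Hz : hnorm x y <= z * z) by (unfold hnorm, z; nra).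
  assert (Hshift : hnorm (x - 1) y = hnorm x y - 3 * z + 3) by (unfold hnorm, z; ring).
  assert (Hz0 : 0 <= z) by (unfold z; lra).
  assert (Hz1 : 1 < z) by nra.
  destruct (Rle_dec 2 z); nra.
Qed.

Definition sector_offsets : list (Z * Z) :=
  ((0, 0) :: (1, 0) :: (0, 1) :: (-1, 1) :: (1, -1) :: nil)%Z.

Lemma sector_disk_cover s t x y :
  0 <= s -> 0 <= t -> hnorm s t <= 1 -> hnorm (x - s) (y - t) <= 1 ->
  exists ij, In ij sector_offsets /\ hnorm (x - IZR (fst ij)) (y - IZR (snd ij)) <= 1.
Proof.
  intros Hs Ht Hst Hxy.
  destruct (Rle_dec (hnorm x y) 1) as [Hnear | Hfar].
  { exists (0, 0)%Z; split; [simpl; tauto | simpl; rewrite !Rminus_0_r; exact Hnear]. }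
  pose proof (hnorm_le_4_of_disks x y s t Hst Hxy) as H4.
  assert (Hacute : 0 < s * (2 * x + y) + t * (x + 2 * y)).
  { rewrite hnorm_sub in Hxy; pose proof (hnorm_ge0 s t); lra. }
  (* The lines x = y, x + 2y = 0 and 2x + y = 0 point at 30, -30 and 90
     degrees.  The directions between 150 and 270 degrees contradict Hacute;
     in the other four cases a rotation by a multiple of 60 degrees takes the
     sector of the chosen neighbour to that of e1. *)
  destruct (Rle_dec 0 (x - y)); destruct (Rle_dec 0 (x + 2 * y));
    destruct (Rle_dec 0 (2 * x + y)); try (exfalso; nra).
  - exists (1, 0)%Z; split; [simpl; tauto|].
    simpl; rewrite Rminus_0_r; apply hnorm_sub_e1_le1; lra.
  - exists (1, -1)%Z; split; [simpl; tauto|].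
    replace (hnorm (x - IZR (fst (1, -1)%Z)) (y - IZR (snd (1, -1)%Z)))
      with (hnorm (- y - 1) (x + y)) by (unfold hnorm; simpl; ring).
    replace (hnorm x y) with (hnorm (- y) (x + y)) in * by (unfold hnorm; ring).
    apply hnorm_sub_e1_le1; lra.
  - exists (0, 1)%Z; split; [simpl; tauto|].
    replace (hnorm (x - IZR (fst (0, 1)%Z)) (y - IZR (snd (0, 1)%Z)))
      with (hnorm (x + y - 1) (- x)) by (unfold hnorm; simpl; ring).
    replace (hnorm x y) with (hnorm (x + y) (- x)) in * by (unfold hnorm; ring).
    apply hnorm_sub_e1_le1; lra.
  - exists (-1, 1)%Z; split; [simpl; tauto|].
    replace (hnorm (x - IZR (fst (-1, 1)%Z)) (y - IZR (snd (-1, 1)%Z)))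
      with (hnorm (y - 1) (- x - y)) by (unfold hnorm; simpl; ring).
    replace (hnorm x y) with (hnorm y (- x - y)) in * by (unfold hnorm; ring).
    apply hnorm_sub_e1_le1; lra.
Qed.

Lemma triangle_vertex_near f g : 0 <= f -> 0 <= g -> f + g <= 1 ->
  hnorm f g <= 1 \/ hnorm (f - 1) g <= 1 \/ hnorm f (g - 1) <= 1.
Proof.
  intros Hf Hg Hfg.
  (* barycentric average of the squared distances to the three vertices *)
  assert (Havg : (1 - f - g) * hnorm f g + f * hnorm (f - 1) g + g * hnorm f (g - 1)
                 = 3 * ((1 - f - g) * (f + g) + f * g)) by (unfold hnorm; ring).
  assert (Havg_le : 3 * ((1 - f - g) * (f + g) + f * g) <= 1).
  { pose proof (pow2_ge_0 (1 - 2 * f - g)); pose proof (pow2_ge_0 (1 - f - 2 * g));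
      pose proof (pow2_ge_0 (f - g)); nra. }
  destruct (Rle_dec (hnorm f g) 1); [now left|].
  destruct (Rle_dec (hnorm (f - 1) g) 1); [now right; left|].
  destruct (Rle_dec (hnorm f (g - 1)) 1); [now right; right|].
  exfalso.
  destruct (Rle_dec (1 / 3) f); [|destruct (Rle_dec (1 / 3) g)]; nra.
Qed.

Definition lattice_rotation (m n : Z * Z) : Prop :=
  (fst m * snd n - fst n * snd m = 1)%Z /\
  forall x y, hnorm (x * IZR (fst m) + y * IZR (fst n)) (x * IZR (snd m) + y * IZR (snd n))
              = hnorm x y.

Section LatticeRotation.

Variables m n : Z * Z.
Hypothesis rot_mn : lattice_rotation m n.

Let m1 := IZR (fst m).
Let m2 := IZR (snd m).
Let n1 := IZR (fst n).
Let n2 := IZR (snd n).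

Definition lattice_affine (c ij : Z * Z) : Z * Z :=
  (fst c + fst ij * fst m + snd ij * fst n, snd c + fst ij * snd m + snd ij * snd n)%Z.

Lemma rotation_surjective X Y : exists x y, X = x * m1 + y * n1 /\ Y = x * m2 + y * n2.
Proof.
  assert (Hdet : m1 * n2 - n1 * m2 = 1).
  { destruct rot_mn as [Hdet _].
    unfold m1, m2, n1, n2; rewrite <- !mult_IZR, <- minus_IZR, Hdet; reflexivity. }
  exists (X * n2 - Y * n1), (Y * m1 - X * m2); split.
  - transitivity (X * (m1 * n2 - n1 * m2)); [rewrite Hdet | ]; ring.
  - transitivity (Y * (m1 * n2 - n1 * m2)); [rewrite Hdet | ]; ring.
Qed.

Lemma sector_disk_cover_rot (c : Z * Z) s t x y :
  0 <= s -> 0 <= t -> hnorm s t <= 1 ->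
  hnorm (x - (IZR (fst c) + s * m1 + t * n1)) (y - (IZR (snd c) + s * m2 + t * n2)) <= 1 ->
  exists ab, In ab (map (lattice_affine c) sector_offsets) /\
    hnorm (x - IZR (fst ab)) (y - IZR (snd ab)) <= 1.
Proof.
  intros Hs Ht Hst Hxy.
  destruct (rotation_surjective (x - IZR (fst c)) (y - IZR (snd c))) as (X & Y & HX & HY).
  assert (Hpull : forall a b,
    hnorm (x - (IZR (fst c) + a * m1 + b * n1)) (y - (IZR (snd c) + a * m2 + b * n2))
    = hnorm (X - a) (Y - b)).
  { intros a b; destruct rot_mn as [_ Hiso]; fold m1 m2 n1 n2 in Hiso.
    rewrite <- (Hiso (X - a) (Y - b)).
    replace x with (IZR (fst c) + (X * m1 + Y * n1)) by lra.
    replace y with (IZR (snd c) + (X * m2 + Y * n2)) by lra.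
    f_equal; ring. }
  rewrite Hpull in Hxy.
  destruct (sector_disk_cover s t X Y Hs Ht Hst Hxy) as (ij & Hin & Hij).
  exists (lattice_affine c ij); split; [now apply in_map|].
  rewrite <- (Hpull (IZR (fst ij)) (IZR (snd ij))) in Hij.
  unfold lattice_affine, m1, m2, n1, n2 in *; simpl.
  rewrite !plus_IZR, !mult_IZR; exact Hij.
Qed.

End LatticeRotation.

Lemma sector_decomposition al be :
  exists (c m n : Z * Z) (s t : R),
    lattice_rotation m n /\ 0 <= s /\ 0 <= t /\ hnorm s t <= 1 /\
    al = IZR (fst c) + s * IZR (fst m) + t * IZR (fst n) /\
    be = IZR (snd c) + s * IZR (snd m) + t * IZR (snd n).
Proof.
  destruct (base_Int_part al) as [Ha1 Ha2], (base_Int_part be) as [Hb1 Hb2].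
  set (a := Int_part al) in *; set (b := Int_part be) in *.
  set (f := al - IZR a); set (g := be - IZR b).
  assert (Hf : 0 <= f < 1) by (unfold f; lra).
  assert (Hg : 0 <= g < 1) by (unfold g; lra).
  (* (f, g) lies in the lower or the upper triangle of the unit cell; a
     vertex of that triangle within distance 1 gives c, and each of the six
     cases uses its own rotation to bring the triangle to the standard sector. *)
  destruct (Rle_dec (f + g) 1) as [Hlow | Hup].
  - destruct (triangle_vertex_near f g) as [Hv | [Hv | Hv]]; try lra;
      [ exists (a, b), (1, 0)%Z, (0, 1)%Z, f, g
      | exists (a + 1, b)%Z, (-1, 1)%Z, (-1, 0)%Z, g, (1 - f - g)
      | exists (a, b + 1)%Z, (0, -1)%Z, (1, -1)%Z, (1 - f - g), f ].
    all: unfold lattice_rotation; repeat split; simpl; rewrite ?plus_IZR;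
      solve [intros; unfold hnorm; ring | reflexivity | unfold f, g in *; lra
            | unfold hnorm in *; nra].
  - destruct (triangle_vertex_near (1 - f) (1 - g)) as [Hv | [Hv | Hv]]; try lra;
      [ exists (a + 1, b + 1)%Z, (-1, 0)%Z, (0, -1)%Z, (1 - f), (1 - g)
      | exists (a, b + 1)%Z, (1, -1)%Z, (1, 0)%Z, (1 - g), (f + g - 1)
      | exists (a + 1, b)%Z, (0, 1)%Z, (-1, 1)%Z, (f + g - 1), (1 - f) ].
    all: unfold lattice_rotation; repeat split; simpl; rewrite ?plus_IZR;
      solve [intros; unfold hnorm; ring | reflexivity | unfold f, g in *; lra
            | unfold hnorm in *; nra].
Qed.

Lemma lattice_disk_cover al be : exists cells : list (Z * Z), (length cells <= 5)%nat /\
  forall x y, hnorm (x - al) (y - be) <= 1 ->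
    exists ab, In ab cells /\ hnorm (x - IZR (fst ab)) (y - IZR (snd ab)) <= 1.
Proof.
  destruct (sector_decomposition al be)
    as (c & m & n & s & t & Hrot & Hs & Ht & Hst & Hal & Hbe).
  exists (map (lattice_affine m n c) sector_offsets); split.
  - rewrite length_map; simpl; lia.
  - intros x y Hxy; rewrite Hal, Hbe in Hxy.
    exact (sector_disk_cover_rot m n Hrot c s t x y Hs Ht Hst Hxy).
Qed.

(* Lattice coordinates of a point: the inverse of the real extension of
   (a, b) |-> hex_center r o u (a, b). *)
Definition hex_coord_a (r : R) (o u q : R * R) : R :=
  (((fst q - fst o) * fst u + (snd q - snd o) * snd u) * sqrt 3
    - (- (fst q - fst o) * snd u + (snd q - snd o) * fst u)) / (3 * r).

Definition hex_coord_b (r : R) (o u q : R * R) : R :=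
  2 * (- (fst q - fst o) * snd u + (snd q - snd o) * fst u) / (3 * r).

Lemma sqrt3_sq : sqrt 3 ^ 2 = 3.
Proof. rewrite <- Rsqr_pow2; apply Rsqr_sqrt; lra. Qed.

Lemma dist2_hex_coords r o u q1 q2 : 0 < r -> fst u ^ 2 + snd u ^ 2 = 1 ->
  dist2 q1 q2 = r ^ 2 * hnorm (hex_coord_a r o u q1 - hex_coord_a r o u q2)
                              (hex_coord_b r o u q1 - hex_coord_b r o u q2).
Proof.
  intros hr hu.
  destruct q1 as [x1 y1], q2 as [x2 y2], o as [ox oy], u as [ux uy].
  unfold dist2, hex_coord_a, hex_coord_b, hnorm; simpl in *.
  field_simplify_eq; [|lra].
  rewrite sqrt3_sq; replace (uy ^ 2) with (1 - ux ^ 2) by lra; ring.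
Qed.

Lemma hex_coords_center r o u a b : 0 < r -> fst u ^ 2 + snd u ^ 2 = 1 ->
  hex_coord_a r o u (hex_center r o u (a, b)) = IZR a /\
  hex_coord_b r o u (hex_center r o u (a, b)) = IZR b.
Proof.
  intros hr hu.
  destruct o as [ox oy], u as [ux uy].
  unfold hex_center, hex_coord_a, hex_coord_b; simpl in *.
  split; field_simplify_eq; try lra;
    rewrite ?sqrt3_sq; replace (uy ^ 2) with (1 - ux ^ 2) by lra; ring.
Qed.

Theorem lemma4 (r : R) (hr : 0 < r) (o u : R * R)
  (hu : fst u ^ 2 + snd u ^ 2 = 1) (p : R * R) :
  exists cells : list (Z * Z),
    (length cells <= 5)%nat /\
    forall q : R * R, in_disk p r q ->
      exists ab, In ab cells /\ grid_circle r o u ab q.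
Proof.
  set (coords q := (hex_coord_a r o u q, hex_coord_b r o u q)).
  assert (Hr2 : 0 < r ^ 2) by (apply pow_lt; lra).
  assert (Hdisk : forall q c, in_disk c r q <->
    hnorm (fst (coords q) - fst (coords c)) (snd (coords q) - snd (coords c)) <= 1).
  { intros q c; unfold in_disk; rewrite (dist2_hex_coords r o u q c hr hu); simpl.
    split; intros H; nra. }
  destruct (lattice_disk_cover (fst (coords p)) (snd (coords p))) as (cells & Hlen & Hcov).
  exists cells; split; [exact Hlen|].
  intros q Hq; apply Hdisk in Hq.
  destruct (Hcov _ _ Hq) as ([a b] & Hin & Hab).
  exists (a, b); split; [exact Hin|].
  unfold grid_circle; apply Hdisk.
  destruct (hex_coords_center r o u a b hr hu) as [Ea Eb].
  simpl in *; rewrite Ea, Eb; exact Hab.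
Qed.
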